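(* For every graph $G$ and every $S\subseteq V(G)$, $S$ is well-linked if and only if $S$ is externally-well-linked.
   Context: A set $S\subseteq V(G)$ is well-linked if for every pair $A,B\subseteq S$ with $|A|=|B|$ there exist $|A|$ pairwise vertex-disjoint paths from $A$ to $B$. It is externally-well-linked if for every such pair these $|A|$ vertex-disjoint paths from $A$ to $B$ can moreover be chosen with no internal vertex in $S$. *)

From mathcomp Require Import all_boot.
Set Implicit Arguments. Unset Strict Implicit. Unset Printing Implicit Defensive.

Section Graphs.
Variable T : finType.
Variable e : rel T.

Definition simple_graph : Prop := symmetric e /\ irreflexive e.

(* A path: a nonempty sequence of pairwise distinct vertices, consecutive
   ones adjacent.  A single vertex is a (trivial) path. *)
Definition is_gpath (p : seq T) : bool :=
  if p is x :: s then path e x s && uniq p else false.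

Definition pstart (p : seq T) : option T :=
  if p is x :: _ then Some x else None.
Definition pend (p : seq T) : option T :=
  if p is x :: s then Some (last x s) else None.

Definition interior (p : seq T) : seq T :=
  if p is x :: s then behead (belast x s) else [::].

Definition path_from_to (A B : {set T}) (p : seq T) : Prop :=
  is_gpath p /\
  (exists2 a, pstart p = Some a & a \in A) /\
  (exists2 b, pend p = Some b & b \in B).

Definition linkage (A B : {set T}) (Q : seq T -> Prop) : Prop :=
  exists P : 'I_#|A| -> seq T,
    (forall i, path_from_to A B (P i) /\ Q (P i)) /\
    (forall i j, i != j -> [disjoint P i & P j]).

Definition well_linked (S : {set T}) : Prop :=
  forall A B : {set T}, A \subset S -> B \subset S -> #|A| = #|B| ->
    linkage A B (fun _ => True).

Definition externally_well_linked (S : {set T}) : Prop :=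
  forall A B : {set T}, A \subset S -> B \subset S -> #|A| = #|B| ->
    linkage A B (fun p => forall v, v \in interior p -> v \notin S).

End Graphs.

(* Apply well-linkedness to A ∪ C and B ∪ C, where C = S \ (A ∪ B): the two
   sets have equal size and together cover S.  In a linkage between two sets of
   equal size every vertex of either set is an endpoint of the unique path
   through it, so no path has an internal vertex in S; and a path starting in
   A cannot end in C, because a vertex of C on it would also be its start. *)
From mathcomp Require Import all_boot.
Set Implicit Arguments. Unset Strict Implicit. Unset Printing Implicit Defensive.

Section Paths.
Variable T : finType.

Lemma pstart_mem (p : seq T) x : pstart p = Some x -> x \in p.
Proof. by case: p => //= y s [->]; rewrite mem_head. Qed.

Lemma pend_mem (p : seq T) x : pend p = Some x -> x \in p.
Proof. by case: p => //= y s [<-]; apply: mem_last. Qed.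

Lemma interior_mem (p : seq T) v : v \in interior p -> v \in p.
Proof. by case: p => //= x [|y s] //= /mem_belast vys; rewrite inE vys orbT. Qed.

Lemma interior_pstart (p : seq T) v :
  uniq p -> v \in interior p -> pstart p != Some v.
Proof.
case: p => //= x [|y s] //= /andP[xNys _] vi; apply/eqP => -[xv].
by rewrite xv (mem_belast vi) in xNys.
Qed.

Lemma interior_pend (p : seq T) v :
  uniq p -> v \in interior p -> pend p != Some v.
Proof.
case: p => //= x [|y s] //= /andP[_]; rewrite -cons_uniq lastI rcons_uniq.
by case/andP=> lNb _ vi; apply/eqP => -[lv]; rewrite lv vi in lNb.
Qed.

Lemma gpath_uniq (e : rel T) (p : seq T) : is_gpath e p -> uniq p.
Proof. by case: p => // x s /andP[]. Qed.

End Paths.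

Lemma injective_onto (T : finType) (n : nat) (Z : {set T}) (f : 'I_n -> option T) :
  injective f -> (forall i, exists2 z, f i = Some z & z \in Z) -> #|Z| <= n ->
  forall z, z \in Z -> exists i, f i = Some z.
Proof.
move=> f_inj fZ cardZ z zZ.
have sub : f @: 'I_n \subset Some @: Z.
  by apply/subsetP => _ /imsetP[i _ ->]; have [y -> yZ] := fZ i; apply: imset_f.
have : f @: 'I_n == Some @: Z.
  by rewrite eqEcard sub !card_imset //= ?card_ord //; apply: Some_inj.
move/eqP/setP/(_ (Some z)); rewrite imset_f // => /imsetP[i _ ->].
by exists i.
Qed.

Section Linkage.
Variables (T : finType) (e : rel T) (X Y : {set T}).
Variable P : 'I_#|X| -> seq T.
Hypothesis P_from_to : forall i, path_from_to e X Y (P i).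
Hypothesis P_disjoint : forall i j, i != j -> [disjoint P i & P j].
Hypothesis card_XY : #|X| = #|Y|.

Lemma linkage_index_unique i j x : x \in P i -> x \in P j -> i = j.
Proof.
move=> xi xj; apply/eqP; apply: contraT => /P_disjoint dij.
by rewrite (disjointFr dij xi) in xj.
Qed.

Lemma linkage_starts_onto x : x \in X -> exists i, pstart (P i) = Some x.
Proof.
apply: injective_onto => [i j sij||//].
  have [_ [[a si _] _]] := P_from_to i.
  by apply: (linkage_index_unique (x := a)); apply: pstart_mem; rewrite // -sij.
by move=> i; have [_ [[a -> aX] _]] := P_from_to i; exists a.
Qed.

Lemma linkage_ends_onto y : y \in Y -> exists i, pend (P i) = Some y.
Proof.
apply: injective_onto => [i j tij||]; last by rewrite card_XY.
  have [_ [_ [b ti _]]] := P_from_to i.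
  by apply: (linkage_index_unique (x := b)); apply: pend_mem; rewrite // -tij.
by move=> i; have [_ [_ [b -> bY]]] := P_from_to i; exists b.
Qed.

Lemma linkage_mem_start i x : x \in P i -> x \in X -> pstart (P i) = Some x.
Proof.
move=> xi /linkage_starts_onto[j sj].
by rewrite (linkage_index_unique xi (pstart_mem sj)).
Qed.

Lemma linkage_mem_end i y : y \in P i -> y \in Y -> pend (P i) = Some y.
Proof.
move=> yi /linkage_ends_onto[j tj].
by rewrite (linkage_index_unique yi (pend_mem tj)).
Qed.

Lemma linkage_interior_notin i v : v \in interior (P i) -> v \notin X :|: Y.
Proof.
move=> vi; have [gp _] := P_from_to i; have Pu := gpath_uniq gp.
have vP := interior_mem vi.
rewrite inE; apply/norP; split; apply/negP.
  by move/(linkage_mem_start vP)/eqP; rewrite (negPf (interior_pstart Pu vi)).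
by move/(linkage_mem_end vP)/eqP; rewrite (negPf (interior_pend Pu vi)).
Qed.

End Linkage.

Lemma linkage_of_family (T : finType) (e : rel T) (A B : {set T})
    (Q : seq T -> Prop) (I : finType) (P : I -> seq T) :
  (forall i j, i != j -> [disjoint P i & P j]) ->
  (forall a, a \in A -> exists2 i, pstart (P i) = Some a &
                                   path_from_to e A B (P i) /\ Q (P i)) ->
  linkage e A B Q.
Proof.
move=> P_disjoint startA.
have /fin_all_exists[g Hg] : forall k : 'I_#|A|, exists i,
    pstart (P i) = Some (enum_val k) /\ path_from_to e A B (P i) /\ Q (P i).
  by move=> k; have [i si Pi] := startA _ (enum_valP k); exists i.
exists (P \o g); split=> [k | k k' kk']; first by case: (Hg k).
apply: P_disjoint; apply: contra kk' => /eqP gkk'.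
by have [+ _] := Hg k; rewrite gkk'; case: (Hg k') => -> _ [/enum_val_inj ->].
Qed.

Lemma well_linked_externally (T : finType) (e : rel T) (S : {set T}) :
  well_linked e S -> externally_well_linked e S.
Proof.
move=> WL A B sAS sBS cardAB.
pose C := S :\: (A :|: B).
have sCS : C \subset S by apply: subsetDl.
have AC0 : A :&: C = set0 by apply/setP => x; rewrite !inE; case: (x \in A).
have BC0 : B :&: C = set0.
  by apply/setP => x; rewrite !inE; case: (x \in B); rewrite ?orbT ?andbF.
have cardD : #|A :|: C| = #|B :|: C| by rewrite !cardsU AC0 BC0 cardAB.
have [P [P_from_to P_disjoint]] :
    linkage e (A :|: C) (B :|: C) (fun=> True).
  by apply: WL; rewrite // subUset ?sAS ?sBS sCS.
have {}P_from_to i : path_from_to e (A :|: C) (B :|: C) (P i) := (P_from_to i).1.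
have avoidS i v : v \in interior (P i) -> v \notin S.
  move/(linkage_interior_notin P_from_to P_disjoint cardD); apply: contra => vS.
  by rewrite !inE vS /=; case: (v \in A); case: (v \in B).
apply: (linkage_of_family P_disjoint) => a aA.
have [|i si] := linkage_starts_onto P_from_to P_disjoint (x := a).
  by rewrite inE aA.
exists i => //; have [gp [_ [b ti bE]]] := P_from_to i.
split=> [|v]; last exact: avoidS.
split=> //; split; first by exists a.
exists b => //; move: bE; rewrite inE => /orP[//|bC].
have bD : b \in A :|: C by rewrite inE bC orbT.
have := linkage_mem_start P_from_to P_disjoint (pend_mem ti) bD.
by rewrite si => -[ab]; move/setP/(_ b): AC0; rewrite inE -{1}ab aA bC inE.
Qed.

Lemma externally_well_linked_well_linked (T : finType) (e : rel T) (S : {set T}) :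
  externally_well_linked e S -> well_linked e S.
Proof.
move=> EWL A B sAS sBS cardAB.
have [P [P_from_to P_disjoint]] := EWL A B sAS sBS cardAB.
by exists P; split=> // i; have [] := P_from_to i.
Qed.

Theorem lemma15 (T : finType) (e : rel T) (S : {set T}) :
  simple_graph e ->
  (well_linked e S <-> externally_well_linked e S).
Proof.
move=> _; split; first exact: well_linked_externally.
exact: externally_well_linked_well_linked.
Qed.
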